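(* Let $A\in\mathbb{C}^{n\times n}$, $\lambda\in\mathbb{C}$ a simple eigenvalue of $A$, $v\in\mathbb{C}^n\setminus\{0\}$ with $Av=\lambda v$ and $u\in\mathbb{C}^n\setminus\{0\}$ with $A^*u=\bar\lambda u$. Then $\frac{\|u\|\,\|v\|}{|\langle u,v\rangle|}\le\sqrt{1+\mu(A,\lambda,v)^2}$.
   Context: For $v\ne0$, $T_v=v^\perp\subset\mathbb{C}^n$, $P_{v^\perp}$ the orthogonal projection onto $T_v$, $A_{\lambda,v}=P_{v^\perp}(A-\lambda\mathrm{Id})|_{T_v}:T_v\to T_v$, and $\mu(A,\lambda,v)=\|A\|_F\|A_{\lambda,v}^{-1}\|$ (Frobenius norm times operator norm). The quantity $\|u\|\|v\|/|\langle u,v\rangle|$ is the eigenvalue condition number $\mu_\lambda(A,\lambda,v)$. *)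

From HB Require Import structures.
From mathcomp Require Import all_boot all_order all_algebra.
From mathcomp Require Import complex.
From mathcomp Require Import boolp classical_sets reals.
Set Implicit Arguments. Unset Strict Implicit. Unset Printing Implicit Defensive.
Import Order.TTheory GRing.Theory Num.Theory.
Local Open Scope ring_scope.

Section Defs.
Variable R : realType.
Local Notation C := (R[i]).

Definition cabs (z : C) : R := ComplexField.Normc.normc z.

Definition cdot n (x y : 'cV[C]_n) : C := \sum_i x i 0 * conjc (y i 0).

Definition vnorm n (x : 'cV[C]_n) : R := Num.sqrt (\sum_i cabs (x i 0) ^+ 2).

Definition frob n (A : 'M[C]_n) : R :=
  Num.sqrt (\sum_i \sum_j cabs (A i j) ^+ 2).

Definition adjmx n (A : 'M[C]_n) : 'M[C]_n := map_mx conjc A^T.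

Definition in_perp n (v x : 'cV[C]_n) : Prop := cdot x v = 0.

Definition proj_perp n (v x : 'cV[C]_n) : 'cV[C]_n :=
  x - (cdot x v / cdot v v) *: v.

Definition Alv n (A : 'M[C]_n) (lam : C) (v x : 'cV[C]_n) : 'cV[C]_n :=
  proj_perp v ((A - lam%:M) *m x).

(* the inverse of A_{lam,v} : T_v -> T_v; for y in T_v it is the (unique when
   A_{lam,v} is invertible) x in T_v with A_{lam,v} x = y *)
Definition Alv_inv n (A : 'M[C]_n) (lam : C) (v y : 'cV[C]_n) : 'cV[C]_n :=
  xget 0 [set x | in_perp v x /\ Alv A lam v x = y].

Definition opnorm_perp n (v : 'cV[C]_n) (f : 'cV[C]_n -> 'cV[C]_n) : R :=
  sup [set vnorm (f y) | y in [set y | in_perp v y /\ vnorm y <= 1]].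

Definition mu n (A : 'M[C]_n) (lam : C) (v : 'cV[C]_n) : R :=
  frob A * opnorm_perp v (Alv_inv A lam v).

End Defs.

From HB Require Import structures.
From mathcomp Require Import all_boot all_order all_algebra.
From mathcomp Require Import complex.
From mathcomp Require Import boolp classical_sets reals.
From mathcomp Require Import ring lra.
Import Order.TTheory GRing.Theory Num.Theory.
Local Open Scope ring_scope.

(* Write u = alpha v + w with w orthogonal to v.  Since lam is simple,
   A_{lam,v} is injective on v^perp (a vector x in its kernel would extend v
   to a Jordan chain, making (X - lam)^2 divide the characteristic
   polynomial), hence invertible: w = A_{lam,v} x with x in v^perp and
   |x| <= |A_{lam,v}^-1| |w|.  As u is a left eigenvector, (A - lam) x is
   orthogonal to u, so |w|^2 = <A_{lam,v} x, w> = - conj(alpha) <A x, v>,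
   which gives |w| <= |alpha| mu |v|.  Pythagoras then yields
   |u|^2 <= |alpha|^2 |v|^2 (1 + mu^2), while |<u, v>| = |alpha| |v|^2. *)

Set Implicit Arguments. Unset Strict Implicit.

Section Hermitian.
Variable R : realType.
Local Notation C := R[i].
Variable n : nat.
Implicit Types (x y z : 'cV[C]_n) (a : C).

Lemma cabsE (z : C) : (cabs z)%:C%C = `|z|.
Proof. by []. Qed.

Lemma cabs_ge0 (z : C) : 0 <= cabs z.
Proof. by case: z => a b; apply: sqrtr_ge0. Qed.

Lemma cabsM (a b : C) : cabs (a * b) = cabs a * cabs b.
Proof. by apply: (@complexI R); rewrite rmorphM /= !cabsE normrM. Qed.

Lemma cabsN (z : C) : cabs (- z) = cabs z.
Proof. by apply: (@complexI R); rewrite !cabsE normrN. Qed.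

Lemma cabs_conjc (z : C) : cabs z^* = cabs z.
Proof. by apply: (@complexI R); rewrite !cabsE norm_conjC. Qed.

Lemma cabs_realC (r : R) : cabs r%:C%C = `|r|.
Proof. by rewrite /cabs /= expr0n /= addr0 sqrtr_sqr. Qed.

Lemma cdotDl x y z : cdot (x + y) z = cdot x z + cdot y z.
Proof. by rewrite /cdot -big_split; apply: eq_bigr => i _; rewrite mxE mulrDl. Qed.

Lemma cdotZl a x y : cdot (a *: x) y = a * cdot x y.
Proof. by rewrite /cdot mulr_sumr; apply: eq_bigr => i _; rewrite mxE mulrA. Qed.

Lemma cdotBl x y z : cdot (x - y) z = cdot x z - cdot y z.
Proof. by rewrite cdotDl -scaleN1r cdotZl mulN1r. Qed.

Lemma cdot0l y : cdot 0 y = 0.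
Proof. by rewrite -(scale0r 0) cdotZl mul0r. Qed.

Lemma cdotC x y : cdot y x = (cdot x y)^*.
Proof.
rewrite /cdot rmorph_sum; apply: eq_bigr => i _.
by rewrite rmorphM /= conjCK mulrC.
Qed.

Lemma cdotDr x y z : cdot x (y + z) = cdot x y + cdot x z.
Proof. by rewrite cdotC cdotDl rmorphD /= -!cdotC. Qed.

Lemma cdotZr a x y : cdot x (a *: y) = a^* * cdot x y.
Proof. by rewrite cdotC cdotZl rmorphM /= -cdotC. Qed.

Lemma cdotBr x y z : cdot x (y - z) = cdot x y - cdot x z.
Proof. by rewrite cdotC cdotBl rmorphB /= -!cdotC. Qed.

Lemma cdot0r y : cdot y 0 = 0.
Proof. by rewrite cdotC cdot0l rmorph0. Qed.

Lemma cdot_mulmx (M : 'M[C]_n) x y : cdot (M *m x) y = cdot x (adjmx M *m y).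
Proof.
rewrite /cdot; under eq_bigr do rewrite mxE big_distrl /=.
rewrite exchange_big; apply: eq_bigr => j _.
rewrite mxE rmorph_sum big_distrr; apply: eq_bigr => i _.
by rewrite !mxE rmorphM /= conjcK [RHS]mulrCA mulrA.
Qed.

Lemma adjmxB (M N : 'M[C]_n) : adjmx (M - N) = adjmx M - adjmx N.
Proof. by rewrite /adjmx linearB map_mxB. Qed.

Lemma adjmx_scalar a : adjmx (a%:M : 'M[C]_n) = a^*%:M.
Proof. by rewrite /adjmx tr_scalar_mx map_scalar_mx. Qed.

Lemma vnorm_ge0 x : 0 <= vnorm x.
Proof. exact: sqrtr_ge0. Qed.

Lemma vnorm_sqr x : vnorm x ^+ 2 = \sum_i cabs (x i 0) ^+ 2.
Proof. by rewrite sqr_sqrtr // sumr_ge0 // => i _; apply: sqr_ge0. Qed.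

Lemma vnorm_sqrC x : (vnorm x ^+ 2)%:C%C = cdot x x.
Proof.
rewrite vnorm_sqr rmorph_sum; apply: eq_bigr => i _.
by rewrite rmorphXn /= cabsE normCK.
Qed.

Lemma cdot_ge0 x : 0 <= cdot x x.
Proof. by rewrite -vnorm_sqrC lecR sqr_ge0. Qed.

Lemma vnorm_eq0 x : (vnorm x == 0) = (x == 0).
Proof.
apply/idP/eqP => [|->]; last first.
  by rewrite -sqrf_eq0 vnorm_sqr big1 // => i _; rewrite mxE cabs_realC normr0 expr0n.
rewrite -sqrf_eq0 vnorm_sqr psumr_eq0 => [/allP x0|i _]; last exact: sqr_ge0.
apply/matrixP => i j; rewrite ord1 mxE.
have /implyP/(_ isT) := x0 i (mem_index_enum _).
by rewrite sqrf_eq0 => /eqP x_i0; apply/eqP; rewrite -normr_eq0 -cabsE x_i0.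
Qed.

Lemma vnorm0 : vnorm (0 : 'cV[C]_n) = 0.
Proof. by apply/eqP; rewrite vnorm_eq0. Qed.

Lemma cdot_eq0 x : (cdot x x == 0) = (x == 0).
Proof.
rewrite -vnorm_sqrC -(rmorph0 (real_complex R)) (inj_eq (@complexI R)).
by rewrite sqrf_eq0 vnorm_eq0.
Qed.

Lemma vnormZ a x : vnorm (a *: x) = cabs a * vnorm x.
Proof.
apply/eqP; rewrite -(eqrXn2 (_ : 0 < 2)%N) ?mulr_ge0 ?vnorm_ge0 ?cabs_ge0 //.
rewrite exprMn !vnorm_sqr mulr_sumr; apply/eqP/eq_bigr => i _.
by rewrite mxE cabsM exprMn.
Qed.

Lemma vnorm_sqrD_orth a x y : cdot y x = 0 ->
  vnorm (a *: x + y) ^+ 2 = cabs a ^+ 2 * vnorm x ^+ 2 + vnorm y ^+ 2.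
Proof.
move=> yx; apply: (@complexI R); rewrite vnorm_sqrC rmorphD rmorphM /= !vnorm_sqrC.
rewrite cdotDl !cdotDr !cdotZl !cdotZr yx (cdotC y x) yx rmorph0.
by rewrite !mulr0 !addr0 add0r mulrA rmorphXn /= cabsE normCK.
Qed.

Lemma cdot_CauchySchwarz x y : `|cdot x y| ^+ 2 <= cdot x x * cdot y y.
Proof.
have [->|y0] := eqVneq y 0; first by rewrite !cdot0r normr0 expr0n mulr0.
set d := cdot y y; set c := cdot x y.
have d_gt0 : 0 < d by rewrite lt_def cdot_eq0 y0 cdot_ge0.
(* the component of x orthogonal to y has a nonnegative square norm *)
have := cdot_ge0 (x - (c / d) *: y).
rewrite cdotBl !cdotBr !cdotZl !cdotZr -/d -/c (cdotC x y) -/c.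
rewrite rmorphM fmorphV /= (geC0_conj (ltW d_gt0)) normCK.
have -> : cdot x x - c^* / d * c - (c / d * c^* - c / d * (c^* / d * d)) =
  cdot x x - c * c^* / d by field; rewrite gt_eqF.
by rewrite subr_ge0 ler_pdivrMr.
Qed.

Lemma cabs_cdot_le x y : cabs (cdot x y) <= vnorm x * vnorm y.
Proof.
rewrite -ler_sqr ?nnegrE ?cabs_ge0 ?mulr_ge0 ?vnorm_ge0 // -lecR exprMn.
by rewrite rmorphXn rmorphM /= !vnorm_sqrC cabsE cdot_CauchySchwarz.
Qed.

Lemma frob_sqr (M : 'M[C]_n) : frob M ^+ 2 = \sum_i \sum_j cabs (M i j) ^+ 2.
Proof. by rewrite sqr_sqrtr // sumr_ge0 // => i _; rewrite sumr_ge0 // => j _; apply: sqr_ge0. Qed.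

Lemma vnorm_mulmx (M : 'M[C]_n) x : vnorm (M *m x) <= frob M * vnorm x.
Proof.
rewrite -ler_sqr ?nnegrE ?vnorm_ge0 ?mulr_ge0 ?vnorm_ge0 ?sqrtr_ge0 //.
rewrite exprMn frob_sqr !vnorm_sqr mulr_suml; apply: ler_sum => i _.
(* Cauchy-Schwarz row by row: (M x)_i = <row i M, conj x>. *)
pose xc : 'cV[C]_n := \col_j (x j 0)^*.
have -> : (M *m x) i 0 = cdot (row i M)^T xc.
  by rewrite mxE; apply: eq_bigr => j _; rewrite !mxE conjcK.
have -> : \sum_j cabs (x j 0) ^+ 2 = vnorm xc ^+ 2.
  by rewrite vnorm_sqr; apply: eq_bigr => j _; rewrite mxE cabs_conjc.
have -> : \sum_j cabs (M i j) ^+ 2 = vnorm (row i M)^T ^+ 2.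
  by rewrite vnorm_sqr; apply: eq_bigr => j _; rewrite !mxE.
by rewrite -exprMn ler_sqr ?nnegrE ?cabs_ge0 ?mulr_ge0 ?vnorm_ge0 // cabs_cdot_le.
Qed.

End Hermitian.

Section CharPolyMultiplicity.
Variable F : fieldType.
Local Notation e i := (delta_mx i (0 : 'I_1)).

Lemma char_poly_similar n (A P : 'M[F]_n) : P \in unitmx ->
  char_poly (invmx P *m A *m P) = char_poly A.
Proof.
move=> Pu; rewrite /char_poly /char_poly_mx.
set f := @polyC F.
have PV1 : map_mx f (invmx P) *m map_mx f P = 1%:M by rewrite -map_mxM mulVmx ?map_mx1.
have -> : 'X%:M - map_mx f (invmx P *m A *m P) =
          map_mx f (invmx P) *m ('X%:M - map_mx f A) *m map_mx f P.
  rewrite mulmxBr mulmxBl !map_mxM -!mulmxA.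
  by rewrite [map_mx f (invmx P) *m ('X%:M *m _)]mulmxA scalar_mxC -mulmxA PV1 mulmx1.
rewrite !det_mulmx !det_map_mx mulrC mulrA -rmorphM /= det_inv mulfV ?mul1r //.
by rewrite -unitfE -unitmxE.
Qed.

Lemma char_poly_col0 m (M : 'M[F]_m.+1) :
  (forall i, i != 0 -> M i 0 = 0) ->
  char_poly M = ('X - (M 0 0)%:P) * char_poly (row' 0 (col' 0 M)).
Proof.
move=> M_i0; rewrite /char_poly (expand_det_col _ 0) (bigD1 0) //= big1 ?addr0.
  by rewrite /cofactor row'_col'_char_poly_mx addn0 expr0 mul1r !mxE eqxx mulr1n.
by move=> i /negbTE i0; rewrite !mxE i0 mulr0n M_i0 ?i0 // polyC0 subr0 mul0r.
Qed.

Lemma char_poly_Jordan2_dvd m (M : 'M[F]_m.+2) lam c :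
  M *m e 0 = lam *: e 0 ->
  M *m e 1 = lam *: e 1 + c *: e 0 ->
  ('X - lam%:P) ^+ 2 %| char_poly M.
Proof.
rewrite -!colE => M0 M1.
have M_0 i : M i 0 = lam * (i == 0)%:R.
  by have /matrixP/(_ i 0) := M0; rewrite !mxE andbT.
have M_1 i : M i 1 = lam * (i == 1)%:R + c * (i == 0)%:R.
  by have /matrixP/(_ i 0) := M1; rewrite !mxE !andbT.
set M' := row' 0 (col' 0 M).
have lift01 : lift 0 0 = 1 :> 'I_m.+2 by apply: val_inj.
have M'_0 i : M' i 0 = lam * (i == 0)%:R.
  by rewrite !mxE lift01 M_1 -lift01 (inj_eq lift_inj) lift_eqF mulr0 addr0.
rewrite char_poly_col0 => [|i /negbTE i0]; last by rewrite M_0 i0 mulr0.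
rewrite (char_poly_col0 (M := M')) => [|i /negbTE i0]; last by rewrite M'_0 i0 mulr0.
by rewrite M_0 M'_0 !eqxx !mulr1 mulrA -expr2 dvdp_mulIl.
Qed.

Lemma unitmx_complete2 m (v x : 'cV[F]_m.+2) : row_free (col_mx v^T x^T) ->
  exists2 P : 'M[F]_m.+2, P \in unitmx & P *m e 0 = v /\ P *m e 1 = x.
Proof.
set W := col_mx v^T x^T => W_free.
have pidW k (g : 'M[F]_(1 + 1 + m, k)) :
    (pid_mx (1 + 1) : 'M_(1 + 1, 1 + 1 + m)) *m g = usubmx g.
  by rewrite -{1}(vsubmxK g) pid_mx_row mul_row_col mul1mx mul0mx addr0.
have rkW : \rank ((pid_mx (1 + 1) : 'M[F]_(1 + 1, 1 + 1 + m)) *m col_mx W 0) =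
           \rank (pid_mx (1 + 1) : 'M[F]_(1 + 1, 1 + 1 + m)).
  by rewrite pidW col_mxKu rank_pid_mx // (eqP W_free).
have [g g_unit Wg] := complete_unitmx rkW.
have gW (i : 'I_(1 + 1)) k : g (lshift m i) k = W i k.
  by rewrite -[W](_ : @usubmx _ (1 + 1) m _ g = W) ?mxE // -(pidW _ g) -Wg pidW col_mxKu.
exists g^T; first by rewrite unitmx_tr.
split; apply/matrixP => k j; rewrite ord1 -colE !mxE.
  rewrite (_ : 0 = lshift m (lshift 1 (0 : 'I_1))) ?gW ?col_mxEu ?mxE //.
  exact: val_inj.
rewrite (_ : 1 = lshift m (rshift 1 (0 : 'I_1))) ?gW ?col_mxEd ?mxE //.
exact: val_inj.
Qed.

Lemma Jordan_chain_mup n (A : 'M[F]_n) lam c (v x : 'cV[F]_n) :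
  row_free (col_mx v^T x^T) ->
  A *m v = lam *: v -> A *m x = lam *: x + c *: v ->
  (2 <= mup lam (char_poly A))%N.
Proof.
move=> free_vx Av Ax.
have := rank_leq_col (col_mx v^T x^T); rewrite (eqP free_vx).
case: n A v x free_vx Av Ax => [|[|m]] // A v x free_vx Av Ax _.
have [P P_unit [Pv Px]] := unitmx_complete2 free_vx.
rewrite mup_geq ?monic_neq0 ?char_poly_monic // -(char_poly_similar A P_unit).
apply: (char_poly_Jordan2_dvd (c := c)); rewrite -!mulmxA ?Pv ?Px.
  by rewrite Av -scalemxAr -Pv mulKmx.
by rewrite Ax mulmxDr -!scalemxAr -Pv -Px !mulKmx.
Qed.

End CharPolyMultiplicity.

Section PerpOperator.
Variable R : realType.
Local Notation C := R[i].
Variable n : nat.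
Implicit Types (v x y : 'cV[C]_n).

Lemma orthogonal_row_free v x : v != 0 -> x != 0 -> cdot x v = 0 ->
  row_free (col_mx v^T x^T).
Proof.
move=> v0 x0 xv; apply/inj_row_free => w.
rewrite -[w]hsubmxK mul_row_col [lsubmx w]mx11_scalar [rsubmx w]mx11_scalar.
set a := lsubmx w 0 0; set b := rsubmx w 0 0.
rewrite !mul_scalar_mx => /(congr1 trmx).
rewrite trmx0 linearD !linearZ /= !trmxK => abvx.
have a0 : a = 0.
  have /eqP := congr1 (fun y => cdot y v) abvx.
  rewrite cdotDl !cdotZl xv mulr0 addr0 cdot0l mulf_eq0 cdot_eq0 (negbTE v0) orbF.
  by move/eqP.
have /eqP := abvx; rewrite a0 scale0r add0r scaler_eq0 (negbTE x0) orbF => /eqP b0.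
by rewrite b0 raddf0 row_mx0.
Qed.

Lemma simple_eigenvalue_Alv_inj (A : 'M[C]_n) lam v x :
  mup lam (char_poly A) = 1%N -> v != 0 -> A *m v = lam *: v ->
  in_perp v x -> Alv A lam v x = 0 -> x = 0.
Proof.
move=> simple v0 Av xv Ax0; apply/eqP/negPn/negP => x0.
set c := cdot ((A - lam%:M) *m x) v / cdot v v.
have Ax : A *m x = lam *: x + c *: v.
  move/eqP: Ax0; rewrite /Alv /proj_perp -/c subr_eq0 mulmxBl mul_scalar_mx.
  by move=> /eqP <-; rewrite addrC subrK.
by have := Jordan_chain_mup (orthogonal_row_free v0 x0 xv) Av Ax; rewrite simple.
Qed.

Definition proj_line_mx v : 'M[C]_n := (cdot v v)^-1 *: (v *m map_mx conjc v^T).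

(* A_{lam,v} on v^perp, extended by the identity on the line of v: a square
   matrix, invertible as soon as A_{lam,v} is injective on v^perp. *)
Definition Alv_ext (A : 'M[C]_n) lam v : 'M[C]_n :=
  (1%:M - proj_line_mx v) *m (A - lam%:M) *m (1%:M - proj_line_mx v) + proj_line_mx v.

Lemma proj_line_mxE v x : proj_line_mx v *m x = (cdot x v / cdot v v) *: v.
Proof.
rewrite /proj_line_mx -scalemxAl -mulmxA [map_mx _ _ *m x]mx11_scalar.
rewrite mul_mx_scalar scalerA mulrC; congr ((_ * _) *: _).
by rewrite !mxE /cdot; apply: eq_bigr => i _; rewrite !mxE mulrC.
Qed.

Lemma proj_perp_mxE v x : (1%:M - proj_line_mx v) *m x = proj_perp v x.
Proof. by rewrite mulmxBl mul1mx proj_line_mxE. Qed.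

Lemma AlvB (A : 'M[C]_n) lam v x y : Alv A lam v (x - y) = Alv A lam v x - Alv A lam v y.
Proof. by rewrite /Alv mulmxBr -!proj_perp_mxE mulmxBr. Qed.

Lemma proj_perp_id v x : in_perp v x -> proj_perp v x = x.
Proof. by rewrite /in_perp /proj_perp => ->; rewrite mul0r scale0r subr0. Qed.

Section Invertibility.
Variables (A : 'M[C]_n) (lam : C) (v : 'cV[C]_n).
Hypothesis v0 : v != 0.

Lemma proj_perp_perp x : in_perp v (proj_perp v x).
Proof. by rewrite /in_perp /proj_perp cdotBl cdotZl divfK ?subrr ?cdot_eq0. Qed.

Lemma cdot_Alv_ext x : cdot (Alv_ext A lam v *m x) v = cdot x v.
Proof.
rewrite mulmxDl cdotDl -!mulmxA proj_perp_mxE proj_perp_perp add0r.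
by rewrite proj_line_mxE cdotZl divfK ?cdot_eq0.
Qed.

Lemma Alv_ext_perp x : in_perp v x -> Alv_ext A lam v *m x = Alv A lam v x.
Proof.
move=> xv; rewrite mulmxDl proj_line_mxE xv mul0r scale0r addr0.
by rewrite -mulmxA proj_perp_mxE proj_perp_id // /Alv -proj_perp_mxE mulmxA.
Qed.

Hypothesis Alv_inj : forall x, in_perp v x -> Alv A lam v x = 0 -> x = 0.

Lemma Alv_ext_unit : Alv_ext A lam v \in unitmx.
Proof.
rewrite -unitmx_tr -row_free_unit; apply/inj_row_free => w /(congr1 trmx).
rewrite trmx_mul trmxK trmx0 => Gw0.
have wv : in_perp v w^T by rewrite /in_perp -cdot_Alv_ext Gw0 cdot0l.
by apply: trmx_inj; rewrite trmx0; apply: Alv_inj; rewrite -?Alv_ext_perp.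
Qed.

Lemma Alv_invE y : in_perp v y -> Alv_inv A lam v y = invmx (Alv_ext A lam v) *m y.
Proof.
move=> yv; set x := invmx _ *m y.
have Gx : Alv_ext A lam v *m x = y by rewrite mulKVmx // Alv_ext_unit.
have xv : in_perp v x by rewrite /in_perp -cdot_Alv_ext Gx.
have Alv_x : Alv A lam v x = y by rewrite -Alv_ext_perp.
rewrite /Alv_inv; case: xgetP => [z _ [zv Alv_z] | /(_ x) []//].
apply/eqP; rewrite -subr_eq0; apply/eqP/Alv_inj.
  by rewrite /in_perp cdotBl zv xv subrr.
by rewrite AlvB Alv_z Alv_x subrr.
Qed.

Lemma Alv_invP y : in_perp v y ->
  in_perp v (Alv_inv A lam v y) /\ Alv A lam v (Alv_inv A lam v y) = y.
Proof.
move=> yv; have Gx : Alv_ext A lam v *m (Alv_inv A lam v y) = y.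
  by rewrite Alv_invE // mulKVmx // Alv_ext_unit.
have xv : in_perp v (Alv_inv A lam v y) by rewrite /in_perp -cdot_Alv_ext Gx.
by split; rewrite // -Alv_ext_perp.
Qed.

End Invertibility.

End PerpOperator.

Section OperatorNorm.
Variable R : realType.
Local Notation C := R[i].
Variables (n : nat) (v : 'cV[C]_n) (f : 'cV[C]_n -> 'cV[C]_n) (G : 'M[C]_n).
Hypothesis fG : forall y, in_perp v y -> f y = G *m y.

Let image_ball_ub :
  has_ubound [set vnorm (f y) | y in [set y | in_perp v y /\ vnorm y <= 1]]%classic.
Proof.
exists (frob G) => _ [y [yv y1] <-]; rewrite fG //.
by apply: le_trans (vnorm_mulmx _ _) _; rewrite ler_piMr ?sqrtr_ge0.
Qed.

Let le_opnorm_perp y : in_perp v y -> vnorm y <= 1 -> vnorm (f y) <= opnorm_perp v f.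
Proof. by move=> yv y1; apply: (ub_le_sup image_ball_ub); exists y. Qed.

Lemma opnorm_perp_ge0 : 0 <= opnorm_perp v f.
Proof.
apply: le_trans (vnorm_ge0 _) (le_opnorm_perp (y := 0) _ _); last by rewrite vnorm0.
by rewrite /in_perp cdot0l.
Qed.

Lemma opnorm_perp_le y : in_perp v y -> vnorm (f y) <= opnorm_perp v f * vnorm y.
Proof.
move=> yv; have [y0|y_neq0] := eqVneq y 0.
  by rewrite fG // y0 mulmx0 vnorm0 mulr0.
have ny_gt0 : 0 < vnorm y by rewrite lt_def vnorm_eq0 y_neq0 vnorm_ge0.
set c : C := (vnorm y)^-1%:C%C.
have cabs_c : cabs c = (vnorm y)^-1 by rewrite cabs_realC ger0_norm // invr_ge0 ltW.
have cyv : in_perp v (c *: y) by rewrite /in_perp cdotZl yv mulr0.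
have := le_opnorm_perp cyv; rewrite vnormZ cabs_c mulVf ?gt_eqF // lexx fG // -scalemxAr.
by rewrite vnormZ cabs_c -fG // mulrC ler_pdivrMr // => /(_ isT).
Qed.

End OperatorNorm.

Lemma le_sqrt1D_of_pythagoras (R : rcfType) (U V W a mu : R) :
  0 < V -> 0 <= W -> 0 <= a ->
  U ^+ 2 = a ^+ 2 * V ^+ 2 + W ^+ 2 -> W <= a * mu * V ->
  U * V / (a * V ^+ 2) <= Num.sqrt (1 + mu ^+ 2).
Proof.
move=> V_gt0 W_ge0 a_ge0 U2 W_le.
have [->|a_neq0] := eqVneq a 0; first by rewrite mul0r invr0 mulr0 sqrtr_ge0.
have a_gt0 : 0 < a by rewrite lt_def a_neq0.
set s := Num.sqrt _; have s_ge0 : 0 <= s := sqrtr_ge0 _.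
have s2 : s ^+ 2 = 1 + mu ^+ 2 by rewrite sqr_sqrtr // addr_ge0 ?sqr_ge0.
have U_le : `|U| <= a * V * s.
  have aVs_ge0 : 0 <= a * V * s by rewrite !mulr_ge0 // ltW.
  rewrite -ler_sqr ?nnegrE // real_normK ?num_real // U2 !exprMn s2.
  have : W ^+ 2 <= (a * mu * V) ^+ 2 by rewrite ler_sqr ?nnegrE // (le_trans W_ge0).
  by rewrite !exprMn; nra.
rewrite ler_pdivrMr ?mulr_gt0 ?exprn_gt0 //.
have := le_trans (ler_norm U) U_le; nra.
Qed.

Section LeftEigenvector.
Variable R : realType.
Local Notation C := R[i].
Variables (n : nat) (A : 'M[C]_n) (lam : C) (v u : 'cV[C]_n).
Hypothesis v0 : v != 0.

Local Notation alpha := (cdot u v / cdot v v).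
Local Notation w := (proj_perp v u).

Let d0 : cdot v v != 0. Proof. by rewrite cdot_eq0. Qed.

Let cdot_v_w : cdot v w = 0.
Proof. by rewrite cdotC (proj_perp_perp v0 _) rmorph0. Qed.

Lemma vnorm_proj_perp_sqr : vnorm u ^+ 2 = cabs alpha ^+ 2 * vnorm v ^+ 2 + vnorm w ^+ 2.
Proof.
rewrite -vnorm_sqrD_orth; last by rewrite (proj_perp_perp v0).
by rewrite /proj_perp addrC subrK.
Qed.

Lemma cabs_cdot_proj : cabs (cdot u v) = cabs alpha * vnorm v ^+ 2.
Proof.
rewrite -{1}(divfK d0 (cdot u v)) [LHS]cabsM; congr (_ * _).
by apply: (@complexI R); rewrite cabsE vnorm_sqrC ger0_norm ?cdot_ge0.
Qed.

Hypothesis Au : adjmx A *m u = lam^* *: u.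

(* (A - lam) x is orthogonal to the left eigenvector u, so only the
   v-component of u contributes. *)
Lemma cdot_proj_perp_left_eigen x : in_perp v x -> Alv A lam v x = w ->
  cdot w w = - alpha^* * cdot (A *m x) v.
Proof.
move=> xv Alv_x; rewrite -{1}Alv_x /Alv /proj_perp cdotBl cdotZl cdot_v_w mulr0 subr0.
rewrite /proj_perp cdotBr cdotZr cdot_mulmx adjmxB adjmx_scalar mulmxBl Au.
rewrite mul_scalar_mx subrr cdot0r sub0r.
by rewrite mulmxBl mul_scalar_mx cdotBl cdotZl xv mulr0 subr0 mulNr.
Qed.

Lemma vnorm_proj_perp_le x o : in_perp v x -> Alv A lam v x = w ->
  0 <= o -> vnorm x <= o * vnorm w -> vnorm w <= cabs alpha * (frob A * o) * vnorm v.
Proof.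
move=> xv Alv_x o_ge0 x_le.
have rhs_ge0 : 0 <= cabs alpha * (frob A * o) * vnorm v.
  by rewrite !mulr_ge0 ?cabs_ge0 ?sqrtr_ge0 ?vnorm_ge0.
have [w0|w_neq0] := eqVneq (vnorm w) 0; first by rewrite w0.
have w_gt0 : 0 < vnorm w by rewrite lt_def w_neq0 vnorm_ge0.
rewrite -(ler_pM2l w_gt0) -expr2.
have w2 : vnorm w ^+ 2 <= cabs alpha * (vnorm (A *m x) * vnorm v).
  have -> : vnorm w ^+ 2 = cabs (cdot w w).
    by apply: (@complexI R); rewrite vnorm_sqrC cabsE ger0_norm ?cdot_ge0.
  rewrite (cdot_proj_perp_left_eigen xv Alv_x) (cabsM (- alpha^*)) cabsN cabs_conjc.
  by rewrite ler_wpM2l ?cabs_ge0 ?cabs_cdot_le.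
have Ax_le : vnorm (A *m x) <= frob A * (o * vnorm w).
  exact: le_trans (vnorm_mulmx _ _) (ler_wpM2l (sqrtr_ge0 _) x_le).
apply: (le_trans w2).
rewrite [X in _ <= X](_ : _ = cabs alpha * (frob A * (o * vnorm w) * vnorm v)).
  by rewrite ler_wpM2l ?cabs_ge0 // ler_wpM2r ?vnorm_ge0.
by ring.
Qed.

End LeftEigenvector.

Unset Implicit Arguments. Set Strict Implicit.

Theorem lemma3p3 (R : realType) (n : nat) (A : 'M[R[i]]_n) (lam : R[i])
    (v u : 'cV[R[i]]_n) :
  mup lam (char_poly A) = 1%N ->
  v != 0 -> A *m v = lam *: v ->
  u != 0 -> adjmx A *m u = conjc lam *: u ->
  vnorm u * vnorm v / cabs (cdot u v) <= Num.sqrt (1 + mu A lam v ^+ 2).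
Proof.
move=> simple v0 Av _ Au.
have injA x : in_perp v x -> Alv A lam v x = 0 -> x = 0.
  exact: simple_eigenvalue_Alv_inj.
have Alv_inv_mx y : in_perp v y -> Alv_inv A lam v y = invmx (Alv_ext A lam v) *m y.
  exact: Alv_invE.
have wv := proj_perp_perp v0 u.
have [xv Alv_x] := Alv_invP v0 injA wv.
rewrite cabs_cdot_proj //; apply: (le_sqrt1D_of_pythagoras (W := vnorm (proj_perp v u))).
- by rewrite lt_def vnorm_eq0 v0 vnorm_ge0.
- exact: vnorm_ge0.
- exact: cabs_ge0.
- exact: vnorm_proj_perp_sqr.
apply: (vnorm_proj_perp_le v0 Au xv Alv_x).
- exact: opnorm_perp_ge0 Alv_inv_mx.
- exact (opnorm_perp_le Alv_inv_mx wv).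
Qed.
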